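(* For every integer $k\ge 1$ and every real $t$, $$R_{k}(t^{2})=-R_{k-1}(t^{2})+4t\,T_{2k-1}(t)+(-1)^{k-1}8t^{2}.$$ Consequently, for every $t\in(0,1]$ and every integer $k\ge 0$, $$\frac{|R_{k}(t^{2})|}{t}\leq 4(2k+1)t+4\sum_{j=1}^{k}\min\{1,(2j-1)t\}.$$
   Context: $T_k$ denotes the Chebyshev polynomial of the first kind: $T_0(t)=1$, $T_1(t)=t$, $T_{k+1}(t)=2tT_k(t)-T_{k-1}(t)$. For each integer $k\ge 0$, $P_k$ and $Q_k$ are the unique polynomials such that $T_{2k}(t)=(-1)^k+P_k(t^2)$ and $T_{2k+1}(t)=(-1)^k(2k+1)t+t\,Q_k(t^2)$ for all real $t$ (so $P_k(0)=Q_k(0)=0$). For $k\ge 0$ define $R_k(x):=2P_k(x)-4(-1)^k(2k+1)x$. *)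

From HB Require Import structures.
From mathcomp Require Import all_boot all_order all_algebra.
Set Implicit Arguments. Unset Strict Implicit. Unset Printing Implicit Defensive.
Import Order.TTheory GRing.Theory Num.Theory.
Local Open Scope ring_scope.

Section Cheb.
Variable R : realFieldType.

(* pair (T_n, T_{n+1}) *)
Fixpoint cheb_pair (n : nat) : {poly R} * {poly R} :=
  match n with
  | 0%N => (1, 'X)
  | n'.+1 => let (a, b) := cheb_pair n' in (b, 2%:R *: 'X * b - a)
  end.

Definition cheb (n : nat) : {poly R} := (cheb_pair n).1.

(* P_k : T_{2k}(t) = (-1)^k + P_k(t^2); even_poly p has i-th coefficient p`_(2i) *)
Definition chebP (k : nat) : {poly R} :=
  even_poly (cheb k.*2) - ((-1) ^+ k)%:P.

(* Q_k : T_{2k+1}(t) = (-1)^k (2k+1) t + t Q_k(t^2) *)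
Definition chebQ (k : nat) : {poly R} :=
  odd_poly (cheb k.*2.+1) - ((-1) ^+ k * (k.*2.+1)%:R)%:P.

Definition chebR (k : nat) : {poly R} :=
  2%:R *: chebP k - (4%:R * (-1) ^+ k * (k.*2.+1)%:R) *: 'X.

End Cheb.

From HB Require Import structures.
From mathcomp Require Import all_boot all_order all_algebra.
From mathcomp Require Import ring lra.
Import Order.TTheory GRing.Theory Num.Theory.
Local Open Scope ring_scope.

(* Since T_(2k) is even, P_k(t^2) = T_(2k)(t) - (-1)^k, so R_k(t^2) is an
   explicit expression in T_(2k)(t), and the three-term recurrence
   T_(2k) = 2t T_(2k-1) - T_(2k-2) gives the recurrence for R_k.
   For the bound, iterate the recurrence with the triangle inequality: it
   suffices that |T_(2j-1)(t)| <= min(1, (2j-1)t) on [0, 1].  Both estimates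
   come from the Pell identity T_n^2 - (t^2 - 1) U_(n-1)^2 = 1, which for
   t^2 <= 1 bounds |T_n| and |(t^2 - 1) U_(n-1)| by 1, whence
   |T_(n+2)| <= |T_n| + 2t. *)

Lemma horner_even_poly_sqr {R : comNzRingType} (p : {poly R}) (t : R) :
  2%:R * (even_poly p).[t ^+ 2] = p.[t] + p.[- t].
Proof.
have split_even_odd x : p.[x] = (even_poly p).[x ^+ 2] + (odd_poly p).[x ^+ 2] * x.
  by rewrite -{1}(poly_even_odd p) !hornerE !horner_comp !hornerE.
by rewrite (split_even_odd t) (split_even_odd (- t)) sqrrN; ring.
Qed.

Section Chebyshev.
Variable R : realFieldType.
Implicit Types (t : R) (n k : nat).

Lemma chebSS n : cheb R n.+2 = 2%:R *: 'X * cheb R n.+1 - cheb R n.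
Proof. by rewrite /cheb /=; case: (cheb_pair R n). Qed.

Lemma horner_chebSS n t :
  (cheb R n.+2).[t] = 2%:R * t * (cheb R n.+1).[t] - (cheb R n).[t].
Proof. by rewrite chebSS !hornerE. Qed.

Lemma horner_chebN n t : (cheb R n).[- t] = (-1) ^+ n * (cheb R n).[t].
Proof.
suff : (cheb R n).[- t] = (-1) ^+ n * (cheb R n).[t] /\
       (cheb R n.+1).[- t] = (-1) ^+ n.+1 * (cheb R n.+1).[t] by case.
elim: n => [|n [IHn IHn1]]; first by rewrite /= !hornerE expr1; split => //; ring.
by split => //; rewrite !horner_chebSS IHn IHn1 !exprS; ring.
Qed.

Lemma horner_chebR_sqr k t : (chebR R k).[t ^+ 2] =
  2%:R * ((cheb R k.*2).[t] - (-1) ^+ k) - 4%:R * (-1) ^+ k * (k.*2.+1)%:R * t ^+ 2.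
Proof.
have even_part := horner_even_poly_sqr (cheb R k.*2) t.
have sign_even : (-1) ^+ k.*2 = 1 :> R by rewrite -mul2n exprM sqrrN !expr1n.
rewrite horner_chebN sign_even mul1r in even_part.
rewrite /chebR /chebP !hornerE.
have -> : (even_poly (cheb R k.*2)).[t ^+ 2] = (cheb R k.*2).[t].
  have two_neq0 : 2%:R != 0 :> R by rewrite pnatr_eq0.
  by apply: (mulfI two_neq0); rewrite even_part; ring.
by ring.
Qed.

Lemma chebR_recurrence k t : (1 <= k)%N ->
  (chebR R k).[t ^+ 2] =
    - (chebR R k.-1).[t ^+ 2] + 4%:R * t * (cheb R k.*2.-1).[t]
    + (-1) ^+ k.-1 * 8%:R * t ^+ 2.
Proof.
case: k => // k _ /=.
rewrite !horner_chebR_sqr doubleS horner_chebSS /= exprS -!natr1 -!muln2 !natrM.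
by ring.
Qed.

(* The pair (T_n(t), U_(n-1)(t)): the coordinates of (t + sqrt(t^2 - 1))^n
   in the basis (1, sqrt(t^2 - 1)). *)
Fixpoint chebTU t n : R * R :=
  if n is n'.+1 then
    let (c, u) := chebTU t n' in (t * c + (t ^+ 2 - 1) * u, t * u + c)
  else (1, 0).

Lemma horner_chebTU n t : (cheb R n).[t] = (chebTU t n).1.
Proof.
suff : (cheb R n).[t] = (chebTU t n).1 /\ (cheb R n.+1).[t] = (chebTU t n.+1).1.
  by case.
elim: n => [|n [IHn IHn1]]; first by rewrite /= !hornerE; split => //; ring.
by split => //; rewrite horner_chebSS IHn IHn1 /=; case: (chebTU t n) => c u /=; ring.
Qed.

Lemma chebTU_pell n t :
  (chebTU t n).1 ^+ 2 - (t ^+ 2 - 1) * (chebTU t n).2 ^+ 2 = 1.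
Proof.
elim: n => [|n IHn] /=; first by ring.
by move: IHn; case: (chebTU t n) => c u /= pell; rewrite -[RHS]pell; ring.
Qed.

Lemma chebTU_SS n t : (chebTU t n.+2).1 =
  (2%:R * t ^+ 2 - 1) * (chebTU t n).1 + 2%:R * t * ((t ^+ 2 - 1) * (chebTU t n).2).
Proof. by rewrite /=; case: (chebTU t n) => c u /=; ring. Qed.

Lemma norm_le1_sqr (x : R) : x ^+ 2 <= 1 -> `|x| <= 1.
Proof. by move=> x2_le1; rewrite ler_norml; apply/andP; split; nra. Qed.

Lemma norm_chebTU_le1 n t : t ^+ 2 <= 1 ->
  `|(chebTU t n).1| <= 1 /\ `|(t ^+ 2 - 1) * (chebTU t n).2| <= 1.
Proof.
move=> t2_le1; have := chebTU_pell n t; case: (chebTU t n) => c u /= pell.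
have u2_ge0 := sqr_ge0 u; have c2_ge0 := sqr_ge0 c.
split; apply: norm_le1_sqr; first by nra.
have -> : ((t ^+ 2 - 1) * u) ^+ 2 = (t ^+ 2 - 1) * ((t ^+ 2 - 1) * u ^+ 2) by ring.
have -> : (t ^+ 2 - 1) * u ^+ 2 = c ^+ 2 - 1 by lra.
by nra.
Qed.

Lemma norm_horner_cheb_le1 n t : t ^+ 2 <= 1 -> `|(cheb R n).[t]| <= 1.
Proof. by move=> t2_le1; rewrite horner_chebTU; case: (norm_chebTU_le1 n t t2_le1). Qed.

Lemma norm_horner_cheb_odd_le k t : 0 <= t -> t <= 1 ->
  `|(cheb R k.*2.+1).[t]| <= (k.*2.+1)%:R * t.
Proof.
move=> t_ge0 t_le1; have t2_le1 : t ^+ 2 <= 1 by nra.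
rewrite horner_chebTU; elim: k => [|k IHk].
  by rewrite /= mul1r ger0_norm; lra.
rewrite doubleS chebTU_SS.
have [_ w_le1] := norm_chebTU_le1 k.*2.+1 t t2_le1.
have -> : (k.*2.+3)%:R = (k.*2.+1)%:R + 2%:R :> R by rewrite -!natr1; ring.
move: IHk w_le1; set c := (chebTU t _).1; set w := _ * (chebTU t _).2.
by rewrite !ler_norml => /andP [? ?] /andP [? ?]; apply/andP; split; nra.
Qed.

Lemma norm_horner_cheb_odd_le_min k t : 0 <= t -> t <= 1 ->
  `|(cheb R k.*2.+1).[t]| <= Num.min 1 ((k.*2.+1)%:R * t).
Proof.
move=> t_ge0 t_le1.
by rewrite le_min norm_horner_cheb_le1 ?norm_horner_cheb_odd_le //; nra.
Qed.

Lemma norm_chebR_le k t : 0 < t -> t <= 1 ->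
  `|(chebR R k).[t ^+ 2]| <=
    (4%:R * (k.*2.+1)%:R * t
     + 4%:R * \sum_(1 <= j < k.+1) Num.min 1 ((j.*2.-1)%:R * t)) * t.
Proof.
move=> t_gt0 t_le1; have t2_ge0 := sqr_ge0 t.
elim: k => [|k IHk].
  rewrite big_geq // horner_chebR_sqr /= hornerE expr0 !mulr1 mulr0 addr0.
  by rewrite ler0_norm; nra.
rewrite big_nat_recr //= chebR_recurrence //= -/(k.*2).
have -> : (k.*2.+3)%:R = (k.*2.+1)%:R + 2%:R :> R by rewrite -!natr1; ring.
have cheb_le := norm_horner_cheb_odd_le_min k t (ltW t_gt0) t_le1.
move: IHk cheb_le; set r := (chebR R k).[_]; set c := (cheb R _).[t].
set m := Num.min _ _; set S := \sum_(_ <= _ < _) _ => IHk cheb_le.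
have triangle : `|- r + 4%:R * t * c + (-1) ^+ k * 8%:R * t ^+ 2| <=
    `|r| + 4%:R * t * `|c| + 8%:R * t ^+ 2.
  apply: (le_trans (ler_normD _ _)); apply: lerD.
    apply: (le_trans (ler_normD _ _)); rewrite normrN lerD //.
    by rewrite !normrM (ger0_norm (ltW t_gt0)) ger0_norm.
  rewrite !normrM normrX normrN normr1 expr1n mul1r ger0_norm //.
  by rewrite ger0_norm ?(ltW t_gt0) // expr2.
apply: (le_trans triangle).
have : 4%:R * t * `|c| <= 4%:R * t * m by rewrite ler_pM2l //; lra.
by nra.
Qed.

End Chebyshev.

Theorem mainTheorem2 (R : realFieldType) :
  (forall (k : nat) (t : R), (1 <= k)%N ->
     (chebR R k).[t ^+ 2] =
       - (chebR R k.-1).[t ^+ 2] + 4%:R * t * (cheb R (k.*2.-1)).[t]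
       + (-1) ^+ k.-1 * 8%:R * t ^+ 2)
  /\
  (forall (t : R) (k : nat), 0 < t -> t <= 1 ->
     `|(chebR R k).[t ^+ 2]| / t <=
       4%:R * (k.*2.+1)%:R * t
       + 4%:R * \sum_(1 <= j < k.+1) Num.min 1 ((j.*2.-1)%:R * t)).
Proof.
split; first exact: chebR_recurrence.
by move=> t k t_gt0 t_le1; rewrite ler_pdivrMr //; exact: norm_chebR_le.
Qed.
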